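(* Let $\mathcal{S}=\{s_1,\dots,s_N\}$ be a finite state space, $\mathcal{A}$ a finite action space, $\gamma\in(0,1)$, and consider the real MDP $\langle\mathcal{S},\mathcal{A},\mathbb{P},R,\gamma\rangle$ and the DT MDP $\langle\mathcal{S},\mathcal{A},\mathbb{P}',R',\gamma\rangle$. Then for all states $s_i,s_j,s_k,s_l\in\mathcal{S}$ and all $n\in\mathbb{N}$, $$d_n(s_i,s_l)\le d_n(s_i,s_j)+d_n(s_k,s_j)+d_n(s_k,s_l).$$
   Context: $\mathbb{P}(\cdot|s,a),\mathbb{P}'(\cdot|s,a)$ are probability distributions on $\mathcal{S}$; $R,R':\mathcal{S}\times\mathcal{A}\to\mathbb{R}$. For distributions $P,Q$ on $\mathcal{S}$ and a cost $d:\mathcal{S}\times\mathcal{S}\to[0,\infty)$ (not required to vanish on the diagonal), $W_1(P,Q;d)=\min_\Lambda\sum_{i,j}\lambda_{i,j}d(s_i,s_j)$ over nonnegative $N\times N$ matrices with row sums $P(s_i)$ and column sums $Q(s_j)$. Define $d_0\equiv0$ and $d_n(s_i,s_j)=\max_a\{|R(s_i,a)-R'(s_j,a)|+\gamma W_1(\mathbb{P}(\cdot|s_i,a),\mathbb{P}'(\cdot|s_j,a);d_{n-1})\}$. In $d_n(x,y)$ the first argument $x$ is a state of the real MDP and the second $y$ a state of the DT MDP, so the inequality concerns real-MDP states $s_i,s_k$ and DT-MDP states $s_j,s_l$. *)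

From HB Require Import structures.
From mathcomp Require Import all_boot all_order all_algebra.
From mathcomp Require Import boolp classical_sets reals.
Set Implicit Arguments. Unset Strict Implicit. Unset Printing Implicit Defensive.
Import Order.TTheory GRing.Theory Num.Theory.
Local Open Scope ring_scope.
Local Open Scope classical_set_scope.

Section Bisim.
Variables (R : realType) (S A : finType).

Definition is_distr (p : S -> R) : Prop :=
  (forall s, 0 <= p s) /\ \sum_(s : S) p s = 1.

Definition is_coupling (p q : S -> R) (Lam : S -> S -> R) : Prop :=
  (forall i j, 0 <= Lam i j) /\
  (forall i, \sum_(j : S) Lam i j = p i) /\
  (forall j, \sum_(i : S) Lam i j = q j).

(* W_1(p, q; d) = min over couplings of sum_{i,j} Lam_{ij} d(s_i,s_j),
   expressed as the infimum of the (attained) set of transport costs *)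
Definition W1 (p q : S -> R) (d : S -> S -> R) : R :=
  inf [set c | exists Lam, is_coupling p q Lam /\
               c = \sum_(i : S) \sum_(j : S) Lam i j * d i j].

(* d_0 = 0, d_n(x,y) = max_a { |R(x,a) - R'(y,a)| + gamma W1(P(.|x,a), P'(.|y,a); d_{n-1}) } ;
   first argument: real-MDP state, second: DT-MDP state *)
Fixpoint dn (P P' : S -> A -> S -> R) (Rw Rw' : S -> A -> R) (gamma : R)
    (n : nat) : S -> S -> R :=
  match n with
  | 0%N => fun _ _ => 0
  | m.+1 => fun x y =>
      \big[Num.max/0]_(a : A)
        (`|Rw x a - Rw' y a| + gamma * W1 (P x a) (P' y a) (dn P P' Rw Rw' gamma m))
  end.
End Bisim.

From HB Require Import structures.
From mathcomp Require Import all_boot all_order all_algebra.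
From mathcomp Require Import boolp classical_sets reals.
From mathcomp Require Import lra.
Set Implicit Arguments. Unset Strict Implicit. Unset Printing Implicit Defensive.
Import Order.TTheory GRing.Theory Num.Theory.
Local Open Scope ring_scope.

(* The heart of the argument is the gluing lemma of optimal transport: two
   couplings sharing a marginal q compose, through the three-way measure
   L1 i j * L2 j k / q j, into a coupling of the outer marginals whose cost is
   controlled by the two original costs.  Composing couplings of (p, q),
   (r, q) (transposed) and (r, t) shows that W1 inherits the "quadrilateral"
   inequality d(i,l) <= d(i,j) + d(k,j) + d(k,l) from its ground cost; since
   |R - R'| also satisfies it, it propagates through the Bellman recursion
   by induction on n. *)

Section Gluing.
Variables (R : realType) (S : finType).
Implicit Types (p q r t : S -> R) (L a b c d : S -> S -> R).

Definition cost L d : R := \sum_i \sum_j L i j * d i j.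

Definition quadrilateral d :=
  forall i j k l, d i l <= d i j + d k j + d k l.

Lemma coupling_tr p q L :
  is_coupling p q L -> is_coupling q p (fun j i => L i j).
Proof. by move=> [? [? ?]]; do !split. Qed.

Lemma cost_tr L d : cost (fun j i => L i j) (fun j i => d i j) = cost L d.
Proof. by rewrite /cost exchange_big. Qed.

Lemma cost_ge0 L d :
  (forall i j, 0 <= L i j) -> (forall i j, 0 <= d i j) -> 0 <= cost L d.
Proof. by move=> L0 d0; do 2!apply: sumr_ge0 => ? _; rewrite mulr_ge0. Qed.

Lemma coupling_row_eq0 p q L :
  is_coupling p q L -> forall i j, p i = 0 -> L i j = 0.
Proof.
move=> [L0 [Lr _]] i j pi0.
by apply: (@psumr_eq0P _ _ predT (L i)) => //; rewrite Lr.
Qed.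

Lemma coupling_col_eq0 p q L :
  is_coupling p q L -> forall i j, q j = 0 -> L i j = 0.
Proof. by move/coupling_tr/coupling_row_eq0 => L0 i j; apply: L0. Qed.

Lemma coupling_prod p q :
  is_distr p -> is_distr q -> is_coupling p q (fun i j => p i * q j).
Proof.
move=> [p0 p1] [q0 q1]; split=> [i j|]; first exact: mulr_ge0.
split=> [i|j]; first by rewrite -mulr_sumr q1 mulr1.
by rewrite -mulr_suml p1 mul1r.
Qed.

Definition glue q L1 L2 i j k := L1 i j * L2 j k / q j.

Definition compose q L1 L2 i k := \sum_j glue q L1 L2 i j k.

Section Glue.
Variables (p q r : S -> R) (L1 L2 : S -> S -> R).
Hypotheses (hL1 : is_coupling p q L1) (hL2 : is_coupling q r L2).

(* When q j = 0 the j-th column of L1 and row of L2 vanish, so the junk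
   value 0^-1 = 0 is harmless. *)
Let mul_divK x j : (q j = 0 -> x = 0) -> x * q j / q j = x.
Proof. by have [->|qj0] := eqVneq (q j) 0 => [->|_]; rewrite ?mul0r ?mulfK. Qed.

Lemma glue_ge0 i j k : 0 <= glue q L1 L2 i j k.
Proof.
have [[L10 [_ L1c]] [L20 _]] := (hL1, hL2).
by rewrite !mulr_ge0 // invr_ge0 -L1c sumr_ge0.
Qed.

Lemma glue_sum_r i j : \sum_k glue q L1 L2 i j k = L1 i j.
Proof.
have [_ [L2r _]] := hL2.
by rewrite -mulr_suml -mulr_sumr L2r mul_divK // => /(coupling_col_eq0 hL1).
Qed.

Lemma glue_sum_l j k : \sum_i glue q L1 L2 i j k = L2 j k.
Proof.
have [_ [_ L1c]] := hL1.
rewrite -!mulr_suml L1c [q j * _]mulrC mul_divK //.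
by move/(coupling_row_eq0 hL2).
Qed.

Lemma coupling_compose : is_coupling p r (compose q L1 L2).
Proof.
have [[_ [L1r _]] [_ [_ L2c]]] := (hL1, hL2).
split=> [i k|]; first by apply: sumr_ge0 => j _; exact: glue_ge0.
split=> [i|k].
- rewrite -L1r exchange_big; apply: eq_bigr => j _; exact: glue_sum_r.
- rewrite exchange_big -L2c; apply: eq_bigr => j _; exact: glue_sum_l.
Qed.

Lemma cost_compose_le a b c :
  (forall i j k, c i k <= a i j + b j k) ->
  cost (compose q L1 L2) c <= cost L1 a + cost L2 b.
Proof.
move=> cab; pose G := glue q L1 L2.
have costL1 : cost L1 a = \sum_i \sum_k \sum_j G i j k * a i j.
  apply: eq_bigr => i _; rewrite exchange_big; apply: eq_bigr => j _.
  by rewrite -glue_sum_r mulr_suml.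
have costL2 : cost L2 b = \sum_i \sum_k \sum_j G i j k * b j k.
  rewrite exchange_big; under eq_bigr do rewrite exchange_big.
  rewrite exchange_big; apply: eq_bigr => j _; apply: eq_bigr => k _.
  by rewrite -glue_sum_l mulr_suml.
rewrite costL1 costL2 -big_split /=; apply: ler_sum => i _.
rewrite -big_split /=; apply: ler_sum => k _.
rewrite /compose mulr_suml -big_split /=; apply: ler_sum => j _.
by rewrite -mulrDr ler_wpM2l ?glue_ge0.
Qed.

End Glue.

(* Turns the four-point inequality for d into two three-point ones, one for
   each gluing step. *)
Definition residual d j l : R := \big[Num.max/0]_i (d i l - d i j).

Lemma le_residual d i j l : d i l <= d i j + residual d j l.
Proof. by rewrite -lerBlDl; apply: le_bigmax. Qed.

Lemma residual_le d j k l :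
  (forall i j, 0 <= d i j) -> quadrilateral d ->
  residual d j l <= d k j + d k l.
Proof.
move=> d0 dquad; apply: bigmax_le => [|i _]; first by rewrite addr_ge0.
by rewrite lerBlDl addrA.
Qed.

Lemma W1_le_cost p q L d :
  (forall i j, 0 <= d i j) -> is_coupling p q L -> W1 p q d <= cost L d.
Proof.
move=> d0 hL; apply: ge_inf; last by exists L.
by exists 0 => _ [L' [[L'0 _] ->]]; exact: cost_ge0.
Qed.

Lemma le_W1 p q d x :
  is_distr p -> is_distr q ->
  (forall L, is_coupling p q L -> x <= cost L d) -> x <= W1 p q d.
Proof.
move=> hp hq xle; apply: lb_le_inf => [|_ [L [hL ->]]]; last exact: xle.
by exists (cost (fun i j => p i * q j) d), (fun i j => p i * q j);
  split=> //; exact: coupling_prod.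
Qed.

Lemma W1_quadrilateral p q r t d :
  is_distr p -> is_distr q -> is_distr r -> is_distr t ->
  (forall i j, 0 <= d i j) -> quadrilateral d ->
  W1 p t d <= W1 p q d + W1 r q d + W1 r t d.
Proof.
move=> hp hq hr ht d0 dquad.
have glued L1 L2 L3 : is_coupling p q L1 -> is_coupling r q L2 ->
    is_coupling r t L3 -> W1 p t d <= cost L1 d + cost L2 d + cost L3 d.
  move=> h1 /coupling_tr h2 h3.
  have h23 := coupling_compose h2 h3.
  have h123 := coupling_compose h1 h23.
  apply: le_trans (W1_le_cost d0 h123) _.
  apply: le_trans (cost_compose_le h1 h23 (@le_residual d)) _.
  rewrite -addrA lerD2l -(cost_tr L2).
  by apply: (cost_compose_le h2 h3) => j k l; exact: residual_le.
suff : W1 p t d - W1 p q d - W1 r q d <= W1 r t d by lra.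
apply: le_W1 => // L3 h3; rewrite lerBlDr.
suff : W1 p t d - W1 p q d - cost L3 d <= W1 r q d by lra.
apply: le_W1 => // L2 h2; rewrite lerBlDr.
suff : W1 p t d - cost L2 d - cost L3 d <= W1 p q d by lra.
apply: le_W1 => // L1 h1; have := glued _ _ _ h1 h2 h3; lra.
Qed.

End Gluing.

Section Bisimulation.
Variables (R : realType) (S A : finType).
Variables (P P' : S -> A -> S -> R) (Rw Rw' : S -> A -> R) (gamma : R).
Hypotheses (gamma_ge0 : 0 <= gamma)
  (hP : forall s a, is_distr (P s a)) (hP' : forall s a, is_distr (P' s a)).

Local Notation d n := (dn P P' Rw Rw' gamma n).

Lemma dn_ge0 n x y : 0 <= d n x y.
Proof.
case: n => [|n] //=; apply: (big_rec (>= 0)) => // a m _ m0.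
by rewrite le_max m0 orbT.
Qed.

Lemma quadrilateral_reward a : quadrilateral (fun x y => `|Rw x a - Rw' y a|).
Proof.
move=> i j k l; rewrite (distrC (Rw k a)).
apply: le_trans (ler_distD (Rw k a) _ _) _; rewrite lerD2r.
exact: ler_distD.
Qed.

Lemma quadrilateral_dnS n : quadrilateral (d n) -> quadrilateral (d n.+1).
Proof.
move=> dquad i j k l /=.
pose F x y a := `|Rw x a - Rw' y a| + gamma * W1 (P x a) (P' y a) (d n).
apply: bigmax_le => [|a _]; first by rewrite !addr_ge0 // (dn_ge0 n.+1).
apply: (@le_trans _ _ (F i j a + F k j a + F k l a)); last first.
  by rewrite !lerD // (le_bigmax _ (F _ _)).
have := quadrilateral_reward a i j k l.
have := ler_wpM2l gamma_ge0 (W1_quadrilateral (hP i a) (hP' j a) (hP k a)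
  (hP' l a) (@dn_ge0 n) dquad).
rewrite /F !mulrDr; lra.
Qed.

End Bisimulation.

Theorem corollary2 (R : realType) (S A : finType)
  (P P' : S -> A -> S -> R) (Rw Rw' : S -> A -> R) (gamma : R)
  (hgamma : 0 < gamma < 1)
  (hP : forall s a, is_distr (P s a))
  (hP' : forall s a, is_distr (P' s a)) :
  forall (si sj sk sl : S) (n : nat),
    dn P P' Rw Rw' gamma n si sl <=
      dn P P' Rw Rw' gamma n si sj + dn P P' Rw Rw' gamma n sk sj
      + dn P P' Rw Rw' gamma n sk sl.
Proof.
have gamma_ge0 : 0 <= gamma by case/andP: hgamma => /ltW.
move=> si sj sk sl n; elim: n si sj sk sl => [|n IH]; first by move=> * /=; lra.
exact: quadrilateral_dnS.
Qed.
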